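(* Fix $\alpha\in(0,1/2]$ and positive integers $a,n$ with $n\ge \max\{1000(\log(a)+1)/\alpha,\ a+1\}$. Let $A,B$ be disjoint sets with $|A|=a$, $|B|=n$, and let $G$ be the random bipartite graph between $A$ and $B$ in which each of the $an$ pairs is an edge independently with probability $4\alpha/3$. Then with probability at least $1-1/e$ the following property holds: for every nonempty $U\subseteq B$, the number of vertices $y\in A$ with $|U\cap N(y)|>2\alpha|U|$ is at most $24n/(\alpha|U|)$.
   Context: $N(y)$ is the neighbourhood of $y$ in $G$; $\log$ is the natural logarithm. *)

From HB Require Import structures.
From mathcomp Require Import all_boot all_order all_algebra.
From mathcomp Require Import reals sequences exp.
Set Implicit Arguments. Unset Strict Implicit. Unset Printing Implicit Defensive.
Import Order.TTheory GRing.Theory Num.Theory.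
Local Open Scope ring_scope.

Definition bigraph (a n : nat) := {set ('I_a * 'I_n)}.

Definition nbhd (a n : nat) (E : bigraph a n) (y : 'I_a) : {set 'I_n} :=
  [set x : 'I_n | (y, x) \in E].

(* Probability of the graph E in the random bipartite graph G(a, n, p):
   each of the a*n pairs is an edge independently with probability p. *)
Definition graph_prob (R : realType) (a n : nat) (p : R) (E : bigraph a n) : R :=
  p ^+ #|E| * (1 - p) ^+ (a * n - #|E|).

Definition prob_event (R : realType) (a n : nat) (p : R) (P : pred (bigraph a n)) : R :=
  \sum_(E : bigraph a n | P E) graph_prob p E.

Definition good_property (R : realType) (a n : nat) (alpha : R) (E : bigraph a n) : bool :=
  [forall U : {set 'I_n}, (U != set0) ==>
     (#|[set y : 'I_a | 2 * alpha * #|U|%:R < #|U :&: nbhd E y|%:R]|%:R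
        <= 24 * n%:R / (alpha * #|U|%:R))].

(* Proof by an exponential-moment union bound.

   Write p = 4 alpha / 3 and d_U(y) = |U ∩ N(y)|.  Call (U, Y) a witness pair
   when U is nonempty and |Y| > 24 n / (alpha |U|); E is bad iff some witness
   pair has every y in Y with d_U(y) > 2 alpha |U|.  Give (U, Y) the weight
     W_{U,Y}(E) = prod_{y in Y} (5/4)^{d_U(y)} e^{-2 alpha |U| / 5}.
   Since e^{1/5} <= 5/4, each factor is >= 1 for such y, so a bad graph has
   total weight sum_{U,Y} W_{U,Y}(E) >= 1.  The degrees d_U(y), y in Y, are
   sums of |Y||U| independent Bernoulli(p) edges, whence
     E[W_{U,Y}] = (1 + alpha/3)^{|Y||U|} e^{-2 alpha |U||Y|/5}
               <= e^{-alpha |U||Y| / 15} <= e^{-8n/5}.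
   Summing over at most 2^a 2^n <= e^{3n/2} pairs bounds P(bad) by e^{-n/10},
   which is at most 1/e as soon as n >= 10. *)
From HB Require Import structures.
From mathcomp Require Import all_boot all_order all_algebra.
From mathcomp Require Import reals sequences exp.
From mathcomp Require Import ring lra.
Set Implicit Arguments. Unset Strict Implicit. Unset Printing Implicit Defensive.
Import Order.TTheory GRing.Theory Num.Theory.
Local Open Scope ring_scope.

Lemma ler_sum_subset (R : numDomainType) (I : finType) (P Q : pred I) (F : I -> R) :
  (forall i, Q i -> 0 <= F i) -> (forall i, P i -> Q i) ->
  \sum_(i | P i) F i <= \sum_(i | Q i) F i.
Proof.
move=> F_ge0 PQ; rewrite [X in _ <= X](bigID P) /=.
rewrite (eq_bigl P) => [|i]; last exact/andb_idl/PQ.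
by rewrite lerDl sumr_ge0 // => i /andP[Qi _]; apply: F_ge0.
Qed.

Lemma ler_sum_all (R : numDomainType) (I : finType) (P : pred I) (F : I -> R) :
  (forall i, 0 <= F i) -> \sum_(i | P i) F i <= \sum_i F i.
Proof. by move=> F_ge0; apply: ler_sum_subset. Qed.

Lemma ler_sum_term (R : numDomainType) (I : finType) (P : pred I) (F : I -> R) j :
  (forall i, P i -> 0 <= F i) -> P j -> F j <= \sum_(i | P i) F i.
Proof.
move=> F_ge0 Pj; rewrite -[F j](big_pred1_eq (@GRing.add R) j).
by apply: ler_sum_subset => // i /eqP ->.
Qed.

Lemma sum_subsets_const (R : comNzRingType) (T : finType) (c : R) :
  \sum_(A : {set T}) c = c * 2 ^+ #|T|.
Proof.
transitivity (c * \sum_(A : {set T}) 1).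
  by rewrite mulr_sumr; apply: eq_bigr => A _; rewrite mulr1.
congr (_ * _); have <- : \prod_(x : T) ((1 : R) + 1) = 2 ^+ #|T| by rewrite prodr_const.
rewrite bigA_distr.
by apply: eq_bigr => A _; rewrite big1 // => x _; case: ifP.
Qed.

Section RandomBipartiteGraph.
Variables (R : realType) (a n : nat) (p : R).
Implicit Types (E : bigraph a n) (U : {set 'I_n}) (Y : {set 'I_a}).

Lemma graph_prob_prod E :
  graph_prob p E = \prod_(e : 'I_a * 'I_n) (if e \in E then p else 1 - p).
Proof.
rewrite /graph_prob (bigID (mem E)) /=.
rewrite (eq_bigr (fun=> p)) => [|e ->//].
rewrite [X in _ = _ * X](eq_bigr (fun=> 1 - p)) => [|e /negbTE ->//].
rewrite !prodr_const; congr (_ ^+ _ * _ ^+ _).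
have := cardC (mem E); rewrite card_prod !card_ord => <-.
by rewrite addKn; apply: eq_card => e; rewrite !inE.
Qed.

Lemma graph_prob_ge0 E : 0 <= p <= 1 -> 0 <= graph_prob p E.
Proof. by case/andP=> p0 p1; rewrite mulr_ge0 ?exprn_ge0 ?subr_ge0. Qed.

Lemma graph_prob_sum1 : \sum_(E : bigraph a n) graph_prob p E = 1.
Proof.
under eq_bigr do rewrite graph_prob_prod.
by rewrite -bigA_distr big1 // => e _ /=; rewrite subrKC.
Qed.

Lemma prob_event_compl (P : pred (bigraph a n)) :
  prob_event p P = 1 - \sum_(E | ~~ P E) graph_prob p E.
Proof. by rewrite -graph_prob_sum1 (bigID P) /= addrK. Qed.

(* For y in Y, l ^+ |U ∩ N(y)| is a product of one factor l per edge of E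
   between Y and U; so the whole product factorizes over the pairs. *)
Lemma prod_degree_pow (l : R) E Y U :
  \prod_(y in Y) l ^+ #|U :&: nbhd E y| =
  \prod_(e : 'I_a * 'I_n) (if (e \in setX Y U) && (e \in E) then l else 1).
Proof.
pose F y x := if ((y, x) \in setX Y U) && ((y, x) \in E) then l else 1.
transitivity (\prod_(y : 'I_a) \prod_(x : 'I_n) F y x); last first.
  by rewrite pair_big; apply: eq_bigr => -[y x].
rewrite big_mkcond /=; apply: eq_bigr => y _; rewrite /F.
case: ifP => Yy; last by rewrite big1 // => x _; rewrite in_setX Yy.
rewrite -prodr_const big_mkcond /=; apply: eq_bigr => x _.
by rewrite !inE Yy.
Qed.

(* Joint moment generating function of the degrees into U of the vertices
   of Y: these are sums of |Y||U| independent Bernoulli(p) variables. *)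
Lemma degree_mgf (l : R) Y U :
  \sum_(E : bigraph a n) graph_prob p E * \prod_(y in Y) l ^+ #|U :&: nbhd E y|
   = (1 + p * (l - 1)) ^+ (#|Y| * #|U|).
Proof.
under eq_bigr => E _.
  rewrite prod_degree_pow graph_prob_prod -big_split /=.
  under eq_bigr => e _.
    have -> : (if e \in E then p else 1 - p) *
              (if (e \in setX Y U) && (e \in E) then l else 1) =
              (if e \in E then p * (if e \in setX Y U then l else 1) else 1 - p).
      by case: (e \in E); case: (e \in setX Y U); rewrite ?mulr1.
    over.
  over.
rewrite -bigA_distr (bigID (mem (setX Y U))) /=.
rewrite [X in _ * X]big1 => [|e /negbTE ->]; last by rewrite mulr1 subrKC.
rewrite mulr1 (eq_bigr (fun=> 1 + p * (l - 1))) => [|e ->]; last by ring.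
by rewrite prodr_const cardsX.
Qed.

End RandomBipartiteGraph.

Lemma expR_fifth_le (R : realType) : expR (1 / 5 : R) <= 5 / 4.
Proof.
have := expR_ge1Dx (- (1 / 5) : R); have := expRxMexpNx_1 (1 / 5 : R).
have := expR_gt0 (1 / 5 : R); nra.
Qed.

Section WitnessWeights.
Variables (R : realType) (a n : nat) (alpha : R).
Hypothesis alpha_gt0 : 0 < alpha.
Implicit Types (E : bigraph a n) (U : {set 'I_n}) (Y : {set 'I_a}).

Definition large_witness U Y : bool :=
  24 * n%:R / (alpha * #|U|%:R) < #|Y|%:R.

Definition witness_weight U Y E : R :=
  \prod_(y in Y) ((5 / 4) ^+ #|U :&: nbhd E y| * expR (- (2 * alpha * #|U|%:R / 5))).

Definition total_witness_weight E : R :=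
  \sum_(U | U != set0) \sum_(Y | large_witness U Y) witness_weight U Y E.

Lemma witness_weight_ge0 U Y E : 0 <= witness_weight U Y E.
Proof.
rewrite /witness_weight.
by apply: prodr_ge0 => y _; rewrite mulr_ge0 ?expR_ge0 // exprn_ge0 // divr_ge0.
Qed.

Lemma total_witness_weight_ge0 E : 0 <= total_witness_weight E.
Proof.
rewrite /total_witness_weight.
by apply: sumr_ge0 => U _; apply: sumr_ge0 => Y _; exact: witness_weight_ge0.
Qed.

(* If y has more than 2 alpha |U| neighbours in U, its factor in the weight is
   at least 1, because (5/4)^d >= e^(d/5) >= e^(2 alpha |U| / 5). *)
Lemma witness_factor_ge1 U E y :
  2 * alpha * #|U|%:R < #|U :&: nbhd E y|%:R ->
  1 <= (5 / 4) ^+ #|U :&: nbhd E y| * expR (- (2 * alpha * #|U|%:R / 5)).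
Proof.
move=> many_nbrs; set d := #|U :&: nbhd E y|.
apply: le_trans (_ : expR (d%:R * (1 / 5)) * expR (- (2 * alpha * #|U|%:R / 5)) <= _).
  by rewrite -expRD -[X in X <= _]expR0 ler_expR; lra.
rewrite ler_wpM2r ?expR_ge0 // expRM_natl lerXn2r ?nnegrE ?expR_ge0 ?expR_fifth_le //.
by rewrite divr_ge0.
Qed.

(* A bad graph, witnessed by U and the set Y of vertices with too many
   neighbours in U, has total witness weight at least 1. *)
Lemma bad_total_witness_weight_ge1 E :
  ~~ good_property alpha E -> 1 <= total_witness_weight E.
Proof.
case/forallPn=> U; rewrite negb_imply -ltNge => /andP[U0 Y_large].
set Y := [set y | _ < _] in Y_large.
have weight_ge1 : 1 <= witness_weight U Y E.
  apply: (big_ind (fun x => 1 <= x)) => // [x z|y]; first exact: mulr_ege1.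
  by rewrite inE; apply: witness_factor_ge1.
apply: le_trans weight_ge1 _; rewrite /total_witness_weight.
pose F V := \sum_(Z | large_witness V Z) witness_weight V Z E.
apply: le_trans (_ : _ <= F U) _.
  apply: (ler_sum_term (P := large_witness U)) Y_large => Z _.
  exact: witness_weight_ge0.
apply: (ler_sum_term (F := F)) U0 => V _.
by apply: sumr_ge0 => Z _; apply: witness_weight_ge0.
Qed.

(* Expected weight of a single large witness pair: the moment generating
   function gives (1 + alpha/3)^(|Y||U|) e^(-2 alpha |U||Y|/5)
   <= e^(-alpha |U||Y|/15), and alpha |U||Y| > 24 n. *)
Lemma expected_witness_weight U Y :
  U != set0 -> large_witness U Y ->
  \sum_(E : bigraph a n) graph_prob (4 * alpha / 3) E * witness_weight U Y E
    <= expR (- (8 * n%:R / 5)).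
Proof.
move=> U0 Y_large; have U_gt0 : 0 < (#|U|%:R : R) by rewrite ltr0n card_gt0.
have large : 24 * n%:R < #|Y|%:R * (alpha * #|U|%:R).
  by rewrite -ltr_pdivrMr ?mulr_gt0.
rewrite /witness_weight; under eq_bigr do rewrite big_split /= prodr_const mulrA.
rewrite -big_distrl /= degree_mgf.
have -> : 1 + 4 * alpha / 3 * (5 / 4 - 1) = 1 + alpha / 3 by field.
apply: le_trans (_ : expR (alpha / 3) ^+ (#|Y| * #|U|) *
    expR (- (2 * alpha * #|U|%:R / 5)) ^+ #|Y| <= _).
  rewrite ler_wpM2r ?exprn_ge0 ?expR_ge0 // lerXn2r ?nnegrE ?expR_ge0 ?expR_ge1Dx //.
  by rewrite addr_ge0 // divr_ge0 // ltW.
rewrite -!expRM_natl -expRD ler_expR natrM.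
have : 0 <= (#|Y|%:R : R) by []; nra.
Qed.

(* Union bound: the probability that E is bad is at most its expected total
   witness weight, which sums 2^a 2^n terms each at most e^(-8n/5). *)
Lemma bad_prob_le : alpha <= 3 / 4 ->
  \sum_(E : bigraph a n | ~~ good_property alpha E) graph_prob (4 * alpha / 3) E
    <= expR (- (8 * n%:R / 5)) * 2 ^+ a * 2 ^+ n.
Proof.
move=> alpha_small; set p := 4 * alpha / 3; set c := expR (- (8 * n%:R / 5)).
have prob_ge0 E : 0 <= graph_prob p E.
  by apply: graph_prob_ge0; apply/andP; split; have := alpha_gt0; rewrite /p; lra.
have expected_total : \sum_(E : bigraph a n) graph_prob p E * total_witness_weight E =
    \sum_(U | U != set0) \sum_(Y | large_witness U Y)
      \sum_(E : bigraph a n) graph_prob p E * witness_weight U Y E.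
  under eq_bigr do rewrite /total_witness_weight big_distrr /=.
  rewrite exchange_big; apply: eq_bigr => U _.
  by under eq_bigr do rewrite big_distrr /=; rewrite exchange_big.
apply: le_trans (_ : _ <= \sum_(E : bigraph a n | ~~ good_property alpha E)
    graph_prob p E * total_witness_weight E) _.
  apply: ler_sum => E bad; rewrite -[X in X <= _]mulr1 ler_wpM2l //.
  exact: bad_total_witness_weight_ge1.
apply: le_trans (ler_sum_all _
  (fun E => mulr_ge0 (prob_ge0 E) (total_witness_weight_ge0 E))) _.
rewrite expected_total.
apply: le_trans (_ : _ <= \sum_(U | U != set0) \sum_(Y | large_witness U Y) c) _.
  by apply: ler_sum => U U0; apply: ler_sum => Y; apply: expected_witness_weight.
apply: le_trans (_ : _ <= \sum_(U | U != set0) \sum_(Y : {set 'I_a}) c) _.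
  by apply: ler_sum => U _; apply: ler_sum_all => Y; apply: expR_ge0.
apply: le_trans (ler_sum_all _ (fun U => sumr_ge0 _ (fun Y _ => expR_ge0 _))) _.
by rewrite !sum_subsets_const !card_ord.
Qed.

End WitnessWeights.

(* Numerical fact: 4 <= e^(3/2), via e^(1/8) >= 9/8 and repeated doubling. *)
Lemma four_le_expR (R : realType) : (4 : R) <= expR (3 / 2).
Proof.
have e8 : 9 / 8 <= expR (1 / 8 : R) by have := expR_ge1Dx (1 / 8 : R); lra.
have e4 : 81 / 64 <= expR (1 / 4 : R).
  by rewrite [1 / 4](_ : _ = 1 / 8 + 1 / 8) ?expRD; [nra | lra].
have e2 : 16 / 10 <= expR (1 / 2 : R).
  by rewrite [1 / 2](_ : _ = 1 / 4 + 1 / 4) ?expRD; [nra | lra].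
by rewrite [3 / 2](_ : _ = 1 / 2 + 1 / 2 + 1 / 2) ?expRD; [nra | lra].
Qed.

(* The union bound is small: 2^a 2^n e^(-8n/5) <= 4^n e^(-8n/5)
   <= e^(3n/2 - 8n/5) = e^(-n/10) <= e^(-1). *)
Lemma union_bound_small (R : realType) (a n : nat) :
  (a <= n)%N -> (10 : R) <= n%:R ->
  expR (- (8 * n%:R / 5)) * 2 ^+ a * 2 ^+ n <= expR (-1 : R).
Proof.
move=> a_le_n n_ge10.
have pow2_le : (2 : R) ^+ a * 2 ^+ n <= expR (3 / 2) ^+ n.
  apply: le_trans (_ : _ <= (2 * 2) ^+ n) _.
    by rewrite exprMn ler_wpM2r ?exprn_ge0 // ler_eXn2l // ltr1n.
  by rewrite lerXn2r ?nnegrE ?expR_ge0 //; have := four_le_expR R; lra.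
rewrite -mulrA; apply: le_trans (ler_wpM2l (expR_ge0 _) pow2_le) _.
by rewrite -expRM_natl -expRD ler_expR; lra.
Qed.

Theorem mainTheorem9 (R : realType) (alpha : R) (a n : nat) :
  0 < alpha -> alpha <= 1 / 2 ->
  (0 < a)%N -> (0 < n)%N ->
  1000 * (ln (a%:R : R) + 1) / alpha <= n%:R ->
  (a + 1 <= n)%N ->
  1 - (expR (1 : R))^-1 <= prob_event (4 * alpha / 3) (good_property alpha (n:=n) (a:=a)).
Proof.
move=> alpha_gt0 alpha_le_half a_gt0 _ n_large a_lt_n.
have n_ge10 : (10 : R) <= n%:R.
  have ln_a_ge0 : 0 <= ln (a%:R : R) by rewrite ln_ge0 // ler1n.
  have : 0 <= (n%:R : R) * (1 / 2 - alpha) by rewrite mulr_ge0 // subr_ge0.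
  by move: n_large; rewrite ler_pdivrMr //; nra.
rewrite prob_event_compl lerD2l lerN2 -expRN.
apply: le_trans (bad_prob_le a n alpha_gt0 _) _; first lra.
by apply: union_bound_small n_ge10; apply: leq_trans a_lt_n; rewrite leq_addr.
Qed.
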